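(* Let $X$ be a compact metrizable space, let $G$ be a countable amenable group, let $T$ be an action of $G$ on $X$ by homeomorphisms, let $R$ be a commutative unital ring, and let $k$ be a nonnegative even integer. Then $\mathrm{smcid}_k(T;R)\leq\mathrm{mcid}_k(T;R)$.
   Context: Covers: a finite open cover of a closed set $Y \subseteq X$ in $X$ is a finite collection of nonempty open subsets of $X$ whose union contains $Y$. A cover $\mathcal{V}$ refines $\mathcal{U}$ if each member of $\mathcal{V}$ lies in some member of $\mathcal{U}$. The order is $\mathrm{ord}(\mathcal{U}) = \max_{x\in X}\mathrm{Card}\{U\in\mathcal{U}: x\in U\} - 1$, and $\mathcal{D}_Y(\mathcal{U})$ is the least order of a finite open cover of $Y$ in $X$ refining $\mathcal{U}$. With $\mathcal{U}\cap Y = \{U\cap Y : U\in\mathcal{U}, U\cap Y\neq\varnothing\}$, $\check{H}^k(Y;\mathcal{U};R)$ is the set of elements of Čech cohomology $\check{H}^k(Y;R)$ representable by Čech cocycles arising from $\mathcal{U}\cap Y$. A nonempty finite $F \subseteq G$ is $(G_0,\delta)$-invariant if $\mathrm{Card}(gF\cap F) > (1-\delta)\mathrm{Card}(F)$ for all $g\in G_0$. $\mathrm{mcid}_k(T;R)$ is the largest $d\in[0,\infty)$ such that for every $\varepsilon>0$ there are a closed $Y\subseteq X$, a finite open cover $\mathcal{U}$ of $Y$ in $X$ with $\mathcal{D}_Y(\mathcal{U})\in\{k,k+1\}$, and $\eta\in\check{H}^k(Y;\mathcal{U};R)$ such that for every finite $G_0\subseteq G$ and every $\delta>0$ there are a $(G_0,\delta)$-invariant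 nonempty finite $F\subseteq G$ and $F_0\subseteq F$ with: (1) the cup product over $g\in F_0$ of the classes $T_g^*(\eta)\in\check{H}^k(T_g^{-1}(Y);R)$, restricted to $\bigcap_{h\in F_0}T_h^{-1}(Y)$, is nonzero (the empty cup product being $1$); and (2) $k\,\mathrm{Card}(F_0)/\mathrm{Card}(F) > d-\varepsilon$. Elementary symmetric polynomials of classes: for a finite set $F$ with $n=\mathrm{Card}(F)$ enumerated as $g_1,\dots,g_n$, classes $\eta_g\in\check{H}^k(X;R)$ ($k$ even) and $0\le r\le n$, $\sigma_r((\eta_g)_{g\in F}) = \sum_{1\le j_1<\cdots<j_r\le n}\eta_{g_{j_1}}\smile\cdots\smile\eta_{g_{j_r}}$ (with $\sigma_0 = 1$). $\mathrm{smcid}_k(T;R)$ is the largest $d\in[0,\infty)$ such that there are a finite open cover $\mathcal{U}$ of $X$ with $\mathcal{D}_X(\mathcal{U})\in\{k,k+1\}$ and $\eta\in\check{H}^k(X;\mathcal{U};R)$ such that for every finite $G_0\subseteq G$ and every $\varepsilon>0$ there are a $(G_0,\varepsilon)$-invariant nonempty finite $F\subseteq G$ and $r\in\{0,1,\ldots,\mathrm{Card}(F)\}$ with $\sigma_r((T_g^*(\eta))_{g\in F})\neq 0$ and $kr/\mathrm{Card}(F) > d-\varepsilon$. *)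

From HB Require Import structures.
From mathcomp Require Import all_boot all_order all_algebra.
From mathcomp Require Import all_classical all_reals all_analysis.
From mathcomp Require Import Rstruct Rstruct_topology.

Set Implicit Arguments.
Unset Strict Implicit.
Unset Printing Implicit Defensive.

Import Order.TTheory GRing.Theory Num.Theory.
Local Open Scope classical_set_scope.
Local Open Scope ring_scope.

Notation Real := Rdefinitions.R.

Definition metrizable (X : topologicalType) : Prop :=
  exists d : X -> X -> Real,
    [/\ (forall x y, d x y = 0 <-> x = y),
        (forall x y, d x y = d y x),
        (forall x y z, d x z <= d x y + d y z) &
        (forall A : set X, open A <->
           (forall x, A x -> exists2 e : Real, 0 < e & forall y, d x y < e -> A y))].

Definition is_group (G : Type) (mul : G -> G -> G) (one : G) (inv : G -> G) : Prop :=
  [/\ associative mul, left_id one mul & left_inverse one inv mul].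

Definition is_action (G X : Type) (mul : G -> G -> G) (one : G) (T : G -> X -> X) : Prop :=
  (forall x, T one x = x) /\ (forall g h x, T (mul g h) x = T g (T h x)).

Definition bounded_fun (G : Type) (f : G -> Real) : Prop :=
  exists M : Real, forall x, `|f x| <= M.

Definition amenable (G : Type) (mul : G -> G -> G) : Prop :=
  exists m : (G -> Real) -> Real,
    [/\ (forall f g, bounded_fun f -> bounded_fun g ->
           m (fun x => f x + g x) = m f + m g),
        (forall (a : Real) f, bounded_fun f -> m (fun x => a * f x) = a * m f),
        (forall f, bounded_fun f -> (forall x, 0 <= f x) -> 0 <= m f),
        m (fun _ => 1) = 1 &
        (forall g f, bounded_fun f -> m (fun x => f (mul g x)) = m f)].

Section Covers.
Variable X : topologicalType.

Definition covers (Z : set X) (U : seq (set X)) : Prop :=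
  (forall i, (i < size U)%N -> open (nth set0 U i)) /\
  (forall x, Z x -> exists2 i, (i < size U)%N & nth set0 U i x).

(* the members are pairwise distinct (a collection, i.e. a set of opens) *)
Definition distinct_members (U : seq (set X)) : Prop :=
  forall i j, (i < size U)%N -> (j < size U)%N -> nth set0 U i = nth set0 U j -> i = j.

Definition fin_open_cover (Y : set X) (U : seq (set X)) : Prop :=
  [/\ covers Y U, (forall i, (i < size U)%N -> nth set0 U i !=set0) &
      distinct_members U].

Definition refines (V U : seq (set X)) : Prop :=
  forall j, (j < size V)%N -> exists2 i, (i < size U)%N & nth set0 V j `<=` nth set0 U i.

Definition mult_at (x : X) (U : seq (set X)) : nat := count (fun B => `[< B x >]) U.

Definition ord_le (U : seq (set X)) (n : int) : Prop :=
  forall x : X, (mult_at x U)%:Z <= n + 1.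

Definition D_le (Y : set X) (U : seq (set X)) (n : int) : Prop :=
  exists V, [/\ fin_open_cover Y V, refines V U & ord_le V n].

(* D_Y(U) \in {k, k+1}  (D_Y(U) is the least order of a refining cover) *)
Definition D_in (Y : set X) (U : seq (set X)) (k : nat) : Prop :=
  D_le Y U (k%:Z + 1) /\ ~ D_le Y U (k%:Z - 1).

End Covers.

(* A class in H^p(Z;R) (Z closed in X) is represented by a pair (U, c)      *)
(* where U is a finite family of opens of X covering Z and c a p-cocycle    *)
(* on the nerve of U \cap Z; it is zero iff it becomes a coboundary after   *)
(* pulling back along some refinement (direct-limit definition).            *)

Section Cech.
Variables (X : topologicalType) (A : comPzRingType).

Definition cochain := seq nat -> A.
Definition crep := (seq (set X) * cochain)%type.

(* s is a simplex of the nerve of U \cap Z (ordered, repetitions allowed) *)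
Definition simplex (Z : set X) (U : seq (set X)) (s : seq nat) : Prop :=
  all (fun i => i < size U)%N s /\
  exists x, Z x /\ forall i, i \in s -> nth set0 U i x.

Definition face (s : seq nat) (j : nat) : seq nat := take j s ++ drop j.+1 s.

Definition cobdry (c : cochain) : cochain :=
  fun s => \sum_(j < size s) (-1) ^+ j * c (face s j).

(* c is a p-cocycle (p-cochains live on simplices with p+1 vertices) *)
Definition cocycle (Z : set X) (U : seq (set X)) (p : nat) (c : cochain) : Prop :=
  forall s, size s = p.+2 -> simplex Z U s -> cobdry c s = 0.

Definition coboundary (Z : set X) (U : seq (set X)) (p : nat) (c : cochain) : Prop :=
  if p is p'.+1 then
    exists b : cochain, forall s, size s = p.+1 -> simplex Z U s -> c s = cobdry b s
  else forall s, size s = 1%N -> simplex Z U s -> c s = 0.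

Definition crep_zero (Z : set X) (p : nat) (e : crep) : Prop :=
  exists (V : seq (set X)) (lam : nat -> nat),
    [/\ covers Z V,
        (forall j, (j < size V)%N ->
           (lam j < size e.1)%N /\ nth set0 V j `<=` nth set0 e.1 (lam j)) &
        coboundary Z V p (fun s => e.2 (map lam s))].

(* common refinement of two covers: index m <-> (m %/ size V, m %% size V) *)
Definition meet_cover (U V : seq (set X)) : seq (set X) :=
  [seq nth set0 U (m %/ size V) `&` nth set0 V (m %% size V) | m <- iota 0 (size U * size V)].

Definition cr_add (e f : crep) : crep :=
  (meet_cover e.1 f.1,
   fun s => e.2 (map (divn^~ (size f.1)) s) + f.2 (map (modn^~ (size f.1)) s)).

(* cup product of a p-class e with a class f (Alexander-Whitney formula) *)
Definition cr_cup (p : nat) (e f : crep) : crep :=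
  (meet_cover e.1 f.1,
   fun s => e.2 (map (divn^~ (size f.1)) (take p.+1 s)) *
            f.2 (map (modn^~ (size f.1)) (drop p s))).

Definition cr_one : crep := ([:: setT], fun _ => 1).
Definition cr_zero : crep := ([:: setT], fun _ => 0).

Definition cr_pull (f : X -> X) (e : crep) : crep := ([seq f @^-1` B | B <- e.1], e.2).

Definition cr_prod (k : nat) (es : seq crep) : crep := foldr (cr_cup k) cr_one es.

Fixpoint cr_esym (k : nat) (es : seq crep) (r : nat) : crep :=
  match es with
  | [::] => if r is 0%N then cr_one else cr_zero
  | e :: es' => if r is r'.+1 then cr_add (cr_esym k es' r) (cr_cup k e (cr_esym k es' r'))
                else cr_one
  end.

End Cech.

Section Dims.
Variables (X : topologicalType) (G : countType) (mul : G -> G -> G)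
          (T : G -> X -> X) (A : comPzRingType).

Definition invariant (G0 : seq G) (delta : Real) (F : seq G) : Prop :=
  [/\ F != [::], uniq F &
      forall g, g \in G0 ->
        (1 - delta) * (size F)%:R < (size [seq y <- map (mul g) F | y \in F])%:R].

Definition mcid_prop (k : nat) (d : Real) : Prop :=
  forall eps : Real, 0 < eps ->
  exists (Y : set X) (U : seq (set X)) (c : cochain A),
    [/\ closed Y, fin_open_cover Y U, D_in Y U k, cocycle Y U k c &
      forall (G0 : seq G) (delta : Real), 0 < delta ->
      exists (F F0 : seq G),
        [/\ invariant G0 delta F, uniq F0, {subset F0 <= F},
          ~ crep_zero [set x | forall h, h \in F0 -> Y (T h x)] (k * size F0)
              (cr_prod k [seq cr_pull (T g) (U, c) | g <- F0]) &
          d - eps < (k * size F0)%:R / (size F)%:R]].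

Definition smcid_prop (k : nat) (d : Real) : Prop :=
  exists (U : seq (set X)) (c : cochain A),
    [/\ fin_open_cover setT U, D_in setT U k, cocycle setT U k c &
      forall (G0 : seq G) (eps : Real), 0 < eps ->
      exists (F : seq G) (r : nat),
        [/\ invariant G0 eps F, (r <= size F)%N,
          ~ crep_zero setT (k * r) (cr_esym k [seq cr_pull (T g) (U, c) | g <- F] r) &
          d - eps < (k * r)%:R / (size F)%:R]].

Definition mcid (k : nat) : \bar Real :=
  ereal_sup [set (d%:E)%E | d in [set d : Real | 0 <= d /\ mcid_prop k d]].

Definition smcid (k : nat) : \bar Real :=
  ereal_sup [set (d%:E)%E | d in [set d : Real | 0 <= d /\ smcid_prop k d]].

End Dims.

From Pilot Require Import Defs.
From HB Require Import structures.
From mathcomp Require Import all_boot all_order all_algebra.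
From mathcomp Require Import all_classical all_reals all_analysis.
From mathcomp Require Import Rstruct Rstruct_topology.
From mathcomp Require Import ring.

(** A witness (U, eta) for smcid is also a witness for mcid, with Y = X.
  Indeed sigma_r((T_g^* eta)_{g in F}) is the sum, over the r-element
  subsequences F_0 of F, of the cup products of the T_g^* eta (g in F_0);
  if it is nonzero then one of these products is nonzero, with the same
  ratio k r / |F|.  At the level of Cech representatives this needs that
  vanishing classes are closed under sums, and that the cup product
  distributes over sums up to refinement.  The latter rests on the fact
  that two refinement maps into the same cover induce chain homotopic maps
  on cochains (the prism operator), so they pull back a cocycle to
  cohomologous cocycles. *)

Set Implicit Arguments.
Unset Strict Implicit.
Unset Printing Implicit Defensive.
Import Order.TTheory GRing.Theory Num.Theory.
Local Open Scope classical_set_scope.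
Local Open Scope ring_scope.

Section Cochains.
Variable A : comPzRingType.
Implicit Types (c : cochain A) (s t : seq nat).

Lemma face_cons0 (x : nat) t : face (x :: t) 0 = t.
Proof. by rewrite /face /= drop0. Qed.

Lemma face_consS (x : nat) t j : face (x :: t) j.+1 = x :: face t j.
Proof. by []. Qed.

Lemma map_face (f : nat -> nat) s j : map f (face s j) = face (map f s) j.
Proof. by rewrite /face map_cat map_take map_drop. Qed.

Lemma cobdry_nil c : cobdry c [::] = 0.
Proof. by rewrite /cobdry big_ord0. Qed.

Lemma cobdry_cons c x t :
  cobdry c (x :: t) = c t - cobdry (fun u => c (x :: u)) t.
Proof.
rewrite /cobdry /= big_ord_recl /= expr0 mul1r face_cons0 -sumrN.
by congr (_ + _); apply: eq_bigr => j _; rewrite face_consS exprS mulN1r mulNr.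
Qed.

Lemma eq_cobdry c1 c2 s : c1 =1 c2 -> cobdry c1 s = cobdry c2 s.
Proof. by move=> eq_c; apply: eq_bigr => j _; rewrite eq_c. Qed.

Lemma cobdry_map c (f : nat -> nat) s :
  cobdry (fun u => c (map f u)) s = cobdry c (map f s).
Proof. by rewrite /cobdry size_map; apply: eq_bigr => j _; rewrite map_face. Qed.

Lemma cobdryD c1 c2 s :
  cobdry (fun u => c1 u + c2 u) s = cobdry c1 s + cobdry c2 s.
Proof. by rewrite /cobdry -big_split; apply: eq_bigr => j _; rewrite mulrDr. Qed.

Lemma cobdryB c1 c2 s :
  cobdry (fun u => c1 u - c2 u) s = cobdry c1 s - cobdry c2 s.
Proof. by rewrite /cobdry -sumrB; apply: eq_bigr => j _; rewrite mulrBr. Qed.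

Lemma cobdryZ (a : A) c s : cobdry (fun u => a * c u) s = a * cobdry c s.
Proof. by rewrite /cobdry mulr_sumr; apply: eq_bigr => j _; rewrite mulrCA. Qed.

Lemma cobdry0 s : cobdry (fun _ => 0 : A) s = 0.
Proof. by rewrite /cobdry big1 // => j _; rewrite mulr0. Qed.

Section Prism.
Variables lam mu : nat -> nat.

(* [prism c [:: x_0; ..; x_n] = \sum_i (-1)^i c [:: lam x_0; ..; lam x_i; mu x_i; ..; mu x_n]] *)
Fixpoint prism c s : A :=
  if s is x :: t then c (lam x :: mu x :: map mu t) - prism (fun u => c (lam x :: u)) t
  else 0.

Lemma eq_prism c1 c2 s : c1 =1 c2 -> prism c1 s = prism c2 s.
Proof.
elim: s c1 c2 => [//|x t IH] c1 c2 eq_c /=.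
by rewrite eq_c (IH _ (fun u => c2 (lam x :: u))).
Qed.

Lemma prismB c1 c2 s : prism (fun u => c1 u - c2 u) s = prism c1 s - prism c2 s.
Proof.
elim: s c1 c2 => [|x t IH] c1 c2 /=; first by rewrite subr0.
by rewrite (IH (fun u => c1 (lam x :: u)) (fun u => c2 (lam x :: u))); ring.
Qed.

Lemma prism_homotopy c s :
  prism (cobdry c) s + cobdry (prism c) s = c (map mu s) - c (map lam s).
Proof.
elim: s c => [|x t IH] c /=; first by rewrite cobdry_nil !subrr addr0.
set cx := fun u => c (lam x :: u).
rewrite cobdry_cons cobdry_cons (eq_prism t (c2 := fun u => c u - cobdry cx u)); last first.
  by move=> u; rewrite cobdry_cons.
rewrite prismB cobdry_cons.
rewrite (eq_cobdry t (c2 := fun u => (fun v => cx (mu x :: v)) (map mu u) - prism cx u)) //.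
rewrite cobdryB (cobdry_map (fun v => cx (mu x :: v))).
have := IH cx; move: (prism (cobdry cx) t) (cobdry (prism cx) t) => h1 h2 IHx.
have -> : c (lam x :: map lam t) = c (lam x :: map mu t) - (h1 + h2).
  by rewrite -/(cx (map lam t)) -/(cx (map mu t)) IHx opprB addrC subrK.
ring.
Qed.

Lemma prism_eq0 (K : pred nat) c s :
  (forall x, x \in s -> K (lam x) && K (mu x)) ->
  (forall u, size u = (size s).+1 -> all K u -> c u = 0) -> prism c s = 0.
Proof.
elim: s c => [//|x t IH] c Ks c0 /=.
have Kt y : y \in t -> K (lam y) && K (mu y) by move=> yt; apply: Ks; rewrite inE yt orbT.
have /andP [Klx Kmx] := Ks x (mem_head _ _).
rewrite c0 /= ?size_map ?Klx ?Kmx //; last first.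
  by apply/allP => _ /mapP [y /Kt /andP [_ Kmy] ->].
rewrite IH ?subr0 // => u su Ku.
by apply: c0; rewrite /= ?su ?Klx.
Qed.

End Prism.

Definition cup_cochain k (a b : cochain A) : cochain A :=
  fun s => a (take k.+1 s) * b (drop k s).

Lemma cobdry_cup k a b s : (k.+2 <= size s)%N ->
  cobdry (cup_cochain k a b) s = cobdry a (take k.+2 s) * b (drop k.+1 s)
     + (-1) ^+ k * (a (take k.+1 s) * cobdry b (drop k s)).
Proof.
elim: k a s => [|k IH] a [|x [|y t]] //= size_s.
  rewrite cobdry_cons /cup_cochain /= !take0.
  rewrite (eq_cobdry _ (c2 := fun u => a [:: x] * b (x :: u))); last by move=> u; rewrite take0.
  by rewrite cobdryZ !cobdry_cons !cobdry_nil expr0 mul1r; ring.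
rewrite cobdry_cons (eq_cobdry _ (c2 := cup_cochain k (fun u => a (x :: u)) b)) //.
by rewrite IH // cobdry_cons /cup_cochain /= exprS; ring.
Qed.

End Cochains.

Section Representatives.
Variables (X : topologicalType) (A : comPzRingType).
Implicit Types (Z : set X) (U V W : seq (set X)) (s t : seq nat).

Definition refining_map V U (f : nat -> nat) :=
  forall j, (j < size V)%N -> (f j < size U)%N /\ nth set0 V j `<=` nth set0 U (f j).

Lemma refining_id U : refining_map U U id.
Proof. by move=> j Uj; split. Qed.

Lemma refining_comp W V U f g :
  refining_map W V f -> refining_map V U g -> refining_map W U (g \o f).
Proof.
move=> Rf Rg j Wj; have [Vfj sub_f] := Rf j Wj; have [Ugfj sub_g] := Rg _ Vfj.
by split => //; apply: subset_trans sub_g.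
Qed.

Lemma simplex_sub Z U s t : simplex Z U s -> {subset t <= s} -> simplex Z U t.
Proof.
move=> [/allP Us [x [Zx Ux]]] sub_ts; split; first by apply/allP => i /sub_ts /Us.
by exists x; split => // i /sub_ts /Ux.
Qed.

Lemma simplex_map Z V U f s :
  refining_map V U f -> simplex Z V s -> simplex Z U (map f s).
Proof.
move=> Rf [/allP Vs [x [Zx Vx]]]; split.
  by apply/allP => _ /mapP [i /Vs /Rf [] + _ ->].
exists x; split => // _ /mapP [i si ->].
by have [_ sub_f] := Rf i (Vs i si); apply/sub_f/Vx.
Qed.

Lemma divn_pair (a b n : nat) : (b < n)%N -> ((a * n + b) %/ n = a)%N.
Proof. by move=> lt_bn; rewrite divnMDl ?(leq_ltn_trans _ lt_bn) // divn_small // addn0. Qed.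

Lemma modn_pair (a b n : nat) : (b < n)%N -> ((a * n + b) %% n = b)%N.
Proof. by move=> lt_bn; rewrite modnMDl modn_small. Qed.

Lemma pair_ltn (a b m n : nat) : (a < m)%N -> (b < n)%N -> (a * n + b < m * n)%N.
Proof.
move=> lt_am lt_bn; apply: (@leq_trans (a * n + n)); first by rewrite ltn_add2l.
by rewrite addnC -mulSn leq_mul2r lt_am orbT.
Qed.

Lemma size_meet_cover U V : size (meet_cover U V) = (size U * size V)%N.
Proof. by rewrite size_map size_iota. Qed.

Lemma nth_meet_cover U V m : (m < size U * size V)%N ->
  nth set0 (meet_cover U V) m = nth set0 U (m %/ size V) `&` nth set0 V (m %% size V).
Proof. by move=> lt_m; rewrite (nth_map 0%N) ?size_iota // nth_iota. Qed.

Lemma meet_cover_index U V m : (m < size U * size V)%N ->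
  (m %/ size V < size U)%N /\ (m %% size V < size V)%N.
Proof.
move=> lt_m; have V_gt0 : (0 < size V)%N by case: (size V) lt_m; rewrite ?muln0.
by rewrite ltn_divLR // ltn_pmod.
Qed.

Lemma refining_div U V : refining_map (meet_cover U V) U (divn^~ (size V)).
Proof.
move=> j; rewrite size_meet_cover => lt_j; have [? _] := meet_cover_index lt_j.
by split => //; rewrite nth_meet_cover //; apply: subIsetl.
Qed.

Lemma refining_mod U V : refining_map (meet_cover U V) V (modn^~ (size V)).
Proof.
move=> j; rewrite size_meet_cover => lt_j; have [_ ?] := meet_cover_index lt_j.
by split => //; rewrite nth_meet_cover //; apply: subIsetr.
Qed.

Definition pair_map (n : nat) (f g : nat -> nat) (m : nat) : nat := (f m * n + g m)%N.

Lemma refining_pair W U V f g : refining_map W U f -> refining_map W V g ->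
  refining_map W (meet_cover U V) (pair_map (size V) f g).
Proof.
move=> Rf Rg j Wj; have [Ufj sub_f] := Rf j Wj; have [Vgj sub_g] := Rg j Wj.
rewrite size_meet_cover /pair_map; split; first exact: pair_ltn.
rewrite nth_meet_cover ?pair_ltn // divn_pair // modn_pair //.
by move=> x Wx; split; [apply: sub_f | apply: sub_g].
Qed.

Lemma pair_mapK Z W V f g s : refining_map W V g -> simplex Z W s ->
  map (divn^~ (size V)) (map (pair_map (size V) f g) s) = map f s /\
  map (modn^~ (size V)) (map (pair_map (size V) f g) s) = map g s.
Proof.
move=> Rg [/allP Ws _]; rewrite -!map_comp; split; apply/eq_in_map => m /Ws /Rg [Vgm _].
  by rewrite /= divn_pair.
by rewrite /= modn_pair.
Qed.

Lemma covers_meet Z U V : covers Z U -> covers Z V -> covers Z (meet_cover U V).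
Proof.
move=> [oU cU] [oV cV]; split.
  move=> i; rewrite size_meet_cover => lt_i; have [? ?] := meet_cover_index lt_i.
  by rewrite nth_meet_cover //; apply: openI; [apply: oU | apply: oV].
move=> x Zx; have [i Ui Uix] := cU x Zx; have [j Vj Vjx] := cV x Zx.
exists (i * size V + j)%N; first by rewrite size_meet_cover pair_ltn.
by rewrite nth_meet_cover ?pair_ltn // divn_pair // modn_pair.
Qed.

Lemma covers_one Z : covers Z [:: setT].
Proof. by split=> [[|] // _|x _]; [exact: openT | exists 0%N]. Qed.

Lemma eq_coboundary Z V p (c1 c2 : cochain A) :
  (forall s, simplex Z V s -> c1 s = c2 s) ->
  coboundary Z V p c1 -> coboundary Z V p c2.
Proof.
case: p => [|p] eq_c /=; first by move=> c1_0 s s1 Vs; rewrite -eq_c // c1_0.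
by move=> [b c1_b]; exists b => s s1 Vs; rewrite -eq_c // c1_b.
Qed.

Lemma coboundaryD Z V p (c1 c2 : cochain A) :
  coboundary Z V p c1 -> coboundary Z V p c2 ->
  coboundary Z V p (fun s => c1 s + c2 s).
Proof.
case: p => [|p] /=; first by move=> c1_0 c2_0 s s1 Vs; rewrite c1_0 // c2_0 // addr0.
move=> [b1 c1_b1] [b2 c2_b2]; exists (fun s => b1 s + b2 s) => s s1 Vs.
by rewrite cobdryD c1_b1 // c2_b2.
Qed.

Lemma coboundary0 Z V p : coboundary Z V p (fun _ => 0 : A).
Proof. by case: p => [|p] //=; exists (fun _ => 0) => s _ _; rewrite cobdry0. Qed.

Lemma coboundary_map Z W V p f (c : cochain A) : refining_map W V f ->
  coboundary Z V p c -> coboundary Z W p (fun s => c (map f s)).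
Proof.
case: p => [|p] Rf /=.
  by move=> c0 s s1 Ws; apply: c0; [rewrite size_map | apply: simplex_map Ws].
move=> [b c_b]; exists (fun u => b (map f u)) => s s1 Ws.
by rewrite cobdry_map c_b ?size_map //; apply: simplex_map Ws.
Qed.

Lemma coboundary_refining_maps Z W U p lam mu (c : cochain A) :
  refining_map W U lam -> refining_map W U mu -> cocycle Z U p c ->
  coboundary Z W p (fun s => c (map mu s) - c (map lam s)).
Proof.
move=> Rlam Rmu c_cocycle.
pose onU x := fun y => (y < size U)%N && `[< nth set0 U y x >].
have onU_map s x : all (fun i => i < size W)%N s -> (forall i, i \in s -> nth set0 W i x) ->
    forall y, y \in s -> onU x (lam y) && onU x (mu y).
  move=> /allP Ws Wx y sy; have [Ul sub_l] := Rlam y (Ws y sy).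
  have [Um sub_m] := Rmu y (Ws y sy).
  rewrite /onU Ul Um; apply/andP.
  by split; apply/asboolP; [apply: sub_l | apply: sub_m]; apply: Wx.
case: p c_cocycle => [|p] c_cocycle /=.
  (* degree 0: [c] is constant along the edge [lam v, mu v] of the nerve *)
  move=> [|v [|]] //= _ [Wv [x [Zx Wx]]].
  have /andP [/andP [Ul /asboolP Ulx] /andP [Um /asboolP Umx]] :=
    onU_map _ x Wv Wx v (mem_head _ _).
  have := c_cocycle [:: lam v; mu v] erefl.
  rewrite !cobdry_cons cobdry_nil subr0 => -> //; split; first by rewrite /= Ul Um.
  by exists x; split => // i; rewrite !inE => /orP [] /eqP ->.
exists (prism lam mu c) => s s1 [Ws [x [Zx Wx]]].
rewrite -(prism_homotopy lam mu c s) (@prism_eq0 _ _ _ (onU x)) ?add0r //.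
  exact: onU_map.
move=> u su /allP Uu; apply: c_cocycle; first by rewrite su s1.
split; first by apply/allP => i /Uu /andP [].
by exists x; split => // i /Uu /andP [_ /asboolP].
Qed.

Definition cocycle_rep Z p (e : crep X A) := covers Z e.1 /\ cocycle Z e.1 p e.2.

Definition crep_refines Z (e f : crep X A) := exists2 mu, refining_map e.1 f.1 mu &
  forall s, simplex Z e.1 s -> e.2 s = f.2 (map mu s).

Lemma crep_refines_refl Z (e : crep X A) : crep_refines Z e e.
Proof. by exists id; [exact: refining_id | move=> s _; rewrite map_id]. Qed.

Lemma crep_refines_trans Z (e f g : crep X A) :
  crep_refines Z e f -> crep_refines Z f g -> crep_refines Z e g.
Proof.
move=> [m1 R1 e_f] [m2 R2 f_g]; exists (m2 \o m1); first exact: refining_comp R1 R2.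
move=> s es; rewrite e_f // f_g; last exact: simplex_map R1 es.
by rewrite map_comp.
Qed.

Lemma crep_zero_refines Z p (e f : crep X A) : crep_refines Z e f -> covers Z e.1 ->
  cocycle Z f.1 p f.2 -> crep_zero Z p f -> crep_zero Z p e.
Proof.
move=> [mu Rmu e_f] e_cov f_cocycle [V [lam [V_cov Rlam f_cob]]].
exists (meet_cover V e.1), (modn^~ (size e.1)); split.
- exact: covers_meet.
- exact: refining_mod.
have Rlam' := refining_comp (@refining_div V e.1) Rlam.
have Rmu' := refining_comp (@refining_mod V e.1) Rmu.
have f_hom := coboundary_refining_maps Rlam' Rmu' f_cocycle.
have f_cob' := coboundary_map (@refining_div V e.1) f_cob.
apply: eq_coboundary (coboundaryD f_hom f_cob') => s Vs.
rewrite (map_comp mu) (map_comp lam) subrK e_f //.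
exact: simplex_map (@refining_mod V e.1) Vs.
Qed.

Lemma crep_zeroD Z p (e f : crep X A) :
  crep_zero Z p e -> crep_zero Z p f -> crep_zero Z p (cr_add e f).
Proof.
move=> [V1 [l1 [V1_cov R1 e_cob]]] [V2 [l2 [V2_cov R2 f_cob]]].
have R1' := refining_comp (@refining_div V1 V2) R1.
have R2' := refining_comp (@refining_mod V1 V2) R2.
exists (meet_cover V1 V2), (pair_map (size f.1) (l1 \o divn^~ (size V2)) (l2 \o modn^~ (size V2))).
split; [exact: covers_meet | exact: refining_pair |].
have := coboundaryD (coboundary_map (@refining_div V1 V2) e_cob)
                    (coboundary_map (@refining_mod V1 V2) f_cob).
apply: eq_coboundary => s Vs /=.
by have [-> ->] := pair_mapK (l1 \o divn^~ (size V2)) R2' Vs; rewrite -!map_comp.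
Qed.

Lemma crep_zero_vanish Z p (e : crep X A) : covers Z e.1 ->
  (forall s, simplex Z e.1 s -> e.2 s = 0) -> crep_zero Z p e.
Proof.
move=> e_cov e0; exists e.1, id; split; [by [] | exact: refining_id |].
by apply: eq_coboundary (coboundary0 Z e.1 p) => s es; rewrite map_id e0.
Qed.

Lemma cocycle_rep_cup Z k q (e f : crep X A) :
  cocycle_rep Z k e -> cocycle_rep Z q f -> cocycle_rep Z (k + q) (cr_cup k e f).
Proof.
move=> [e_cov e_cocycle] [f_cov f_cocycle]; split; first exact: covers_meet.
move=> s size_s s_simplex.
rewrite (eq_cobdry s (c2 := cup_cochain k (fun u => e.2 (map (divn^~ (size f.1)) u))
                                        (fun u => f.2 (map (modn^~ (size f.1)) u)))) //.
rewrite cobdry_cup ?size_s ?ltnS ?leq_addr // !cobdry_map.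
rewrite e_cocycle ?f_cocycle ?mul0r ?mulr0 ?addr0 //.
- by rewrite size_map size_drop size_s -!addnS addKn.
- apply: simplex_map (@refining_mod e.1 f.1) _.
  by apply: simplex_sub s_simplex _ => i; apply: mem_drop.
- by rewrite size_map size_takel // size_s !ltnS leq_addr.
- apply: simplex_map (@refining_div e.1 f.1) _.
  by apply: simplex_sub s_simplex _ => i; apply: mem_take.
Qed.

Lemma cocycle_rep_add Z p (e f : crep X A) :
  cocycle_rep Z p e -> cocycle_rep Z p f -> cocycle_rep Z p (cr_add e f).
Proof.
move=> [e_cov e_cocycle] [f_cov f_cocycle]; split; first exact: covers_meet.
move=> s size_s s_simplex /=; rewrite cobdryD !cobdry_map.
rewrite e_cocycle ?f_cocycle ?addr0 ?size_map //.
  exact: simplex_map (@refining_mod e.1 f.1) s_simplex.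
exact: simplex_map (@refining_div e.1 f.1) s_simplex.
Qed.

Lemma cocycle_rep_one Z : cocycle_rep Z 0 (cr_one X A).
Proof.
split=> [|[|a [|b [|]]] //= _ _]; first exact: covers_one.
by rewrite !cobdry_cons cobdry_nil subr0 subrr.
Qed.

Lemma cocycle_rep_zero Z p : cocycle_rep Z p (cr_zero X A).
Proof. by split=> [|s _ _]; [exact: covers_one | rewrite cobdry0]. Qed.

Lemma crep_refines_cupr Z k (e f g : crep X A) :
  crep_refines Z f g -> crep_refines Z (cr_cup k e f) (cr_cup k e g).
Proof.
move=> [mu Rmu f_g].
have Rd := @refining_div e.1 f.1.
have Rm := refining_comp (@refining_mod e.1 f.1) Rmu.
exists (pair_map (size g.1) (divn^~ (size f.1)) (mu \o modn^~ (size f.1))).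
  exact: refining_pair.
move=> s s_simplex /=; have [E1 E2] := pair_mapK (divn^~ (size f.1)) Rm s_simplex.
rewrite !map_take !map_drop E1 E2; congr (_ * _).
rewrite f_g; first by rewrite map_drop -map_comp.
apply: simplex_sub (simplex_map (@refining_mod e.1 f.1) s_simplex) _ => i.
exact: mem_drop.
Qed.

Lemma crep_refines_cupDr Z k (e f g : crep X A) :
  crep_refines Z (cr_cup k e (cr_add f g)) (cr_add (cr_cup k e f) (cr_cup k e g)).
Proof.
set W := meet_cover e.1 (meet_cover f.1 g.1).
have Re : refining_map W e.1 _ := @refining_div e.1 (meet_cover f.1 g.1).
have Rfg : refining_map W _ _ := @refining_mod e.1 (meet_cover f.1 g.1).
have Rf := refining_comp Rfg (@refining_div f.1 g.1).
have Rg := refining_comp Rfg (@refining_mod f.1 g.1).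
have Ref := refining_pair Re Rf; have Reg := refining_pair Re Rg.
eexists; first exact: refining_pair Ref Reg.
move=> s s_simplex /=.
set n := size (meet_cover f.1 g.1).
have [E1 E2] := pair_mapK (pair_map (size f.1) (divn^~ n) (divn^~ (size g.1) \o modn^~ n))
                          Reg s_simplex.
have [F1 F2] := pair_mapK (divn^~ n) Rf s_simplex.
have [G1 G2] := pair_mapK (divn^~ n) Rg s_simplex.
rewrite ?map_take ?map_drop E1 E2 ?map_take ?map_drop F1 F2 G1 G2.
by rewrite ?map_take ?map_drop -!map_comp mulrDr.
Qed.

Section Products.
Variables (I : eqType) (Z : set X) (k : nat) (E : I -> crep X A).
Hypothesis E_cocycle : forall i, cocycle_rep Z k (E i).

Lemma cocycle_rep_foldr q (x : crep X A) P : cocycle_rep Z q x ->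
  cocycle_rep Z (k * size P + q) (foldr (cr_cup k) x (map E P)).
Proof.
elim: P => [|i P IH] x_cocycle /=; first by rewrite muln0.
by rewrite mulnS -addnA; apply/cocycle_rep_cup/IH.
Qed.

Lemma cocycle_rep_esym es r : cocycle_rep Z (k * r) (cr_esym k (map E es) r).
Proof.
elim: es r => [|i es IH] [|r] /=; rewrite ?muln0;
  [exact: cocycle_rep_one | exact: cocycle_rep_zero | exact: cocycle_rep_one |].
by apply: cocycle_rep_add; rewrite // mulnS; apply: cocycle_rep_cup.
Qed.

Lemma crep_refines_foldrD P (x y : crep X A) :
  crep_refines Z (foldr (cr_cup k) (cr_add x y) (map E P))
                 (cr_add (foldr (cr_cup k) x (map E P)) (foldr (cr_cup k) y (map E P))).
Proof.
elim: P => [|i P IH] /=; first exact: crep_refines_refl.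
exact: crep_refines_trans (crep_refines_cupr k (E i) IH) (crep_refines_cupDr _ _ _ _ _).
Qed.

Lemma crep_zero_foldr0 P p : crep_zero Z p (foldr (cr_cup k) (cr_zero X A) (map E P)).
Proof.
apply: crep_zero_vanish.
  by have [] := cocycle_rep_foldr P (cocycle_rep_zero Z 0).
by move=> s _; elim: P s => [|i P IH] s //=; rewrite IH mulr0.
Qed.

Lemma crep_zero_foldr_esym P es r :
  (forall S, subseq S es -> size S = r ->
     crep_zero Z (k * (size P + r)) (foldr (cr_cup k) (cr_prod k (map E S)) (map E P))) ->
  crep_zero Z (k * (size P + r)) (foldr (cr_cup k) (cr_esym k (map E es) r) (map E P)).
Proof.
elim: es P r => [|i es IH] P [|r] prods0 /=;
  [by apply: (prods0 [::]) | exact: crep_zero_foldr0 | by apply: (prods0 [::]); rewrite ?sub0seq |].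
set x := cr_esym k (map E es) r.+1; set y := cr_cup k (E i) (cr_esym k (map E es) r).
have x_cocycle : cocycle_rep Z (k * r.+1) x := cocycle_rep_esym es r.+1.
have y_cocycle : cocycle_rep Z (k * r.+1) y.
  by rewrite mulnS; apply/cocycle_rep_cup/cocycle_rep_esym.
have [xy_cov _] := cocycle_rep_foldr P (cocycle_rep_add x_cocycle y_cocycle).
have [_ sum_cocycle] := cocycle_rep_add (cocycle_rep_foldr P x_cocycle)
                                       (cocycle_rep_foldr P y_cocycle).
rewrite -mulnDr in sum_cocycle.
apply: crep_zero_refines (crep_refines_foldrD P x y) xy_cov sum_cocycle _.
apply: crep_zeroD; first by apply: IH => S sub_S; apply/prods0/(subseq_trans sub_S)/subseq_cons.
(* The second summand is a product with [E i] moved into the prefix. *)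
have -> : (size P + r.+1 = size (rcons P i) + r)%N by rewrite size_rcons addSnnS.
rewrite /y -foldr_rcons -map_rcons; apply: IH => S sub_S size_S.
have := prods0 (i :: S); rewrite /= eqxx size_S size_rcons addSnnS.
by rewrite map_rcons foldr_rcons; apply.
Qed.

Lemma esym_neq0_prod_neq0 es r :
  ~ crep_zero Z (k * r) (cr_esym k (map E es) r) ->
  exists S, [/\ subseq S es, size S = r & ~ crep_zero Z (k * r) (cr_prod k (map E S))].
Proof.
move=> esym_neq0; apply: contrapT => no_S; apply: esym_neq0.
have := @crep_zero_foldr_esym [::] es r; rewrite /= add0n; apply => S sub_S size_S.
by apply: contrapT => prod_neq0; apply: no_S; exists S.
Qed.

End Products.
End Representatives.

Lemma cocycle_rep_pull (X : topologicalType) (A : comPzRingType) (f : X -> X) k U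
    (c : cochain A) :
  continuous f -> covers setT U -> cocycle setT U k c ->
  cocycle_rep setT k (cr_pull f (U, c)).
Proof.
move=> f_cont [oU cU] c_cocycle; split; first split.
- move=> i; rewrite size_map => lt_i; rewrite (nth_map set0) //.
  by apply: open_comp (oU i lt_i) => x _; apply: f_cont.
- by move=> x _; have [i lt_i Ui] := cU (f x) I; exists i; rewrite ?size_map ?(nth_map set0).
move=> s size_s [/allP Us [x [_ Ux]]]; apply: c_cocycle => //; split.
  by apply/allP => i /Us; rewrite size_map.
exists (f x); split => // i si; move: (Ux i si).
by rewrite (nth_map set0) // -(size_map (preimage f)); apply: Us.
Qed.

Lemma invariant_le (G : countType) (mul : G -> G -> G) G0 delta delta' F :
  delta <= delta' -> Defs.invariant mul G0 delta F -> Defs.invariant mul G0 delta' F.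
Proof.
move=> le_delta [F_neq0 F_uniq F_inv]; split => // g /F_inv; apply: le_lt_trans.
by rewrite ler_wpM2r ?ler0n // lerD2l lerN2.
Qed.

Theorem lemma4p3 (X : topologicalType) (G : countType)
  (mul : G -> G -> G) (one : G) (inv : G -> G) (T : G -> X -> X)
  (A : comPzRingType) (k : nat) :
  compact [set: X] -> metrizable X ->
  is_group mul one inv -> amenable mul ->
  is_action mul one T -> (forall g, continuous (T g)) ->
  ~~ odd k ->
  (smcid mul T A k <= mcid mul T A k)%E.
Proof.
move=> _ _ _ _ _ T_cont _.
apply: le_ereal_sup => _ [d [d_ge0 [U [c [U_cov U_D c_cocycle smcid_d]]]] <-].
exists d => //; split => // eps eps_gt0; exists setT, U, c; split => //.
move=> G0 delta delta_gt0.
have min_gt0 : 0 < Num.min eps delta by rewrite lt_min eps_gt0.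
have [F [r [F_inv _ esym_neq0 d_lt]]] := smcid_d G0 _ min_gt0.
have E_cocycle g : cocycle_rep setT k (cr_pull (T g) (U, c)).
  by have [[? ?] _ _] := U_cov; apply: cocycle_rep_pull.
have [S [sub_S size_S prod_neq0]] := esym_neq0_prod_neq0 E_cocycle esym_neq0.
exists F, S; split.
- by apply: invariant_le F_inv; rewrite ge_min lexx orbT.
- by case: F_inv => _ F_uniq _; apply: subseq_uniq sub_S F_uniq.
- by move=> g; apply: mem_subseq.
- have -> : [set x | forall h, h \in S -> [set: X] (T h x)] = setT by rewrite -subTset.
  by rewrite size_S.
- by rewrite size_S; apply: le_lt_trans d_lt; rewrite lerD2l lerN2 ge_min lexx.
Qed.
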